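(* Let $L$ be an $R_0$-algebra and $k\in[0,1)$. Given any chain of fated filters $F_0\subset F_1\subset\cdots\subset F_n=L$ of $L$, there exists an $(\in,\in\vee q_k)$-fuzzy fated filter $\mu$ of $L$ whose level fated filters $U(\mu;t)=\{x\in L\mid\mu(x)\ge t\}$, $t\in(0,\tfrac{1-k}{2}]$, are precisely the members $F_0,F_1,\dots,F_n$ of the chain, and such that $U(\mu;\tfrac{1-k}{2})=F_0$.
   Context: An $R_0$-algebra is a bounded distributive lattice $(L,\wedge,\vee,0,1)$ with an order-reversing involution $\neg$ and a binary operation $\to$ such that for all $x,y,z\in L$: $x\to y=\neg y\to\neg x$; $1\to x=x$; $(y\to z)\wedge((x\to y)\to(x\to z))=y\to z$; $x\to(y\to z)=y\to(x\to z)$; $x\to(y\vee z)=(x\to y)\vee(x\to z)$; $(x\to y)\vee((x\to y)\to(\neg x\vee y))=1$. A fated filter of $L$ is a nonempty subset $A\subseteq L$ with $1\in A$ such that for all $x,y\in L$ and $a\in A$, $a\to((x\to y)\to x)\in A$ implies $x\in A$. For $x\in L$, $t\in(0,1]$ and a fuzzy subset $\mu:L\to[0,1]$: $x_t\in\mu$ iff $\mu(x)\ge t$; $x_t\,q_k\,\mu$ iff $\mu(x)+t+k>1$; $x_t\in\vee q_k\,\mu$ iff $x_t\in\mu$ or $x_t\,q_k\,\mu$. $\mu$ is an $(\in,\in\vee q_k)$-fuzzy fated filter of $L$ if (1) for all $x\in L$, $t\in(0,1]$: $x_t\in\mu\Rightarrow 1_t\in\vee q_k\,\mu$; and (2) for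 all $x,a,y\in L$, $t,s\in(0,1]$: if $(a\to((x\to y)\to x))_t\in\mu$ and $a_s\in\mu$ then $x_{\min\{t,s\}}\in\vee q_k\,\mu$. *)

From Stdlib Require Import Reals.
Open Scope R_scope.

Record R0_algebra : Type := {
  car :> Type;
  meet : car -> car -> car;
  join : car -> car -> car;
  zero : car;
  one : car;
  neg : car -> car;
  imp : car -> car -> car;
  meet_assoc : forall x y z, meet x (meet y z) = meet (meet x y) z;
  join_assoc : forall x y z, join x (join y z) = join (join x y) z;
  meet_comm : forall x y, meet x y = meet y x;
  join_comm : forall x y, join x y = join y x;
  meet_absorb : forall x y, meet x (join x y) = x;
  join_absorb : forall x y, join x (meet x y) = x;
  meet_join_distr : forall x y z, meet x (join y z) = join (meet x y) (meet x z);
  meet_zero : forall x, meet x zero = zero;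
  join_one : forall x, join x one = one;
  (* order-reversing involution (x <= y iff meet x y = x) *)
  neg_invol : forall x, neg (neg x) = x;
  neg_antitone : forall x y, meet x y = x -> meet (neg y) (neg x) = neg y;
  R0_1 : forall x y, imp x y = imp (neg y) (neg x);
  R0_2 : forall x, imp one x = x;
  R0_3 : forall x y z, meet (imp y z) (imp (imp x y) (imp x z)) = imp y z;
  R0_4 : forall x y z, imp x (imp y z) = imp y (imp x z);
  R0_5 : forall x y z, imp x (join y z) = join (imp x y) (imp x z);
  R0_6 : forall x y, join (imp x y) (imp (imp x y) (join (neg x) y)) = one
}.

Arguments imp {r} _ _.
Arguments one {r}.

Definition fated_filter (L : R0_algebra) (A : L -> Prop) : Prop :=
  (exists a, A a) /\ A one /\
  forall x y a : L, A a -> A (imp a (imp (imp x y) x)) -> A x.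

Definition fz_in {L : R0_algebra} (mu : L -> R) (x : L) (t : R) : Prop :=
  mu x >= t.
Definition fz_qk {L : R0_algebra} (k : R) (mu : L -> R) (x : L) (t : R) : Prop :=
  mu x + t + k > 1.
Definition fz_in_or_qk {L : R0_algebra} (k : R) (mu : L -> R) (x : L) (t : R) : Prop :=
  fz_in mu x t \/ fz_qk k mu x t.

Definition fuzzy_subset {L : R0_algebra} (mu : L -> R) : Prop :=
  forall x, 0 <= mu x <= 1.

Definition in_inqk_fuzzy_fated_filter (L : R0_algebra) (k : R) (mu : L -> R) : Prop :=
  fuzzy_subset mu /\
  (forall (x : L) (t : R), 0 < t <= 1 -> fz_in mu x t -> fz_in_or_qk k mu one t) /\
  (forall (x a y : L) (t s : R), 0 < t <= 1 -> 0 < s <= 1 ->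
      fz_in mu (imp a (imp (imp x y) x)) t -> fz_in mu a s ->
      fz_in_or_qk k mu x (Rmin t s)).

Definition level_set {L : R0_algebra} (mu : L -> R) (t : R) : L -> Prop :=
  fun x => mu x >= t.

Definition same_set {L : Type} (A B : L -> Prop) : Prop := forall x, A x <-> B x.

(* Rank each element x by the least index i with x in F_i and put
   mu(x) = c / (i + 1), where c = (1 - k)/2.  The level set of mu at the value
   c / (i + 1) is exactly F_i, and every level set U(mu; t) with 0 < t <= c is
   the level set at the smallest such value above t.  Since all level sets of
   mu at its own values are fated filters, mu satisfies even the stronger
   (in, in)-conditions: mu(one) >= mu(x), and x lies in the level set at
   min(mu(a -> ((x -> y) -> x)), mu(a)). *)

From Stdlib Require Import Reals Lra Lia Arith ClassicalDescription.
Open Scope R_scope.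

Lemma fated_filter_same_set (L : R0_algebra) (A B : L -> Prop) :
  same_set A B -> fated_filter L A -> fated_filter L B.
Proof.
  intros AB [[a Aa] [A1 Afated]]. split; [|split].
  - exists a. apply AB, Aa.
  - apply AB, A1.
  - intros x y b Bb Bp. apply AB, (Afated x y b); apply AB; assumption.
Qed.

Lemma fuzzy_fated_filter_of_level_sets (L : R0_algebra) (k : R) (mu : L -> R) :
  fuzzy_subset mu ->
  (forall x, fated_filter L (level_set mu (mu x))) ->
  in_inqk_fuzzy_fated_filter L k mu.
Proof.
  intros mu01 levels. split; [exact mu01|split].
  - intros x t _ xt. left. destruct (levels x) as [_ [one_in _]].
    unfold fz_in, level_set in *. lra.
  - intros x a y t s _ _ pt as_. left. unfold fz_in in *.
    set (p := imp a (imp (imp x y) x)) in *.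
    assert (x_in : forall z, mu p >= mu z -> mu a >= mu z -> mu x >= mu z).
    { intros z pz az. destruct (levels z) as [_ [_ fated]].
      exact (fated x y a az pz). }
    destruct (Rle_dec (mu p) (mu a)) as [pa|ap].
    + pose proof (Rmin_l t s). assert (mu x >= mu p) by (apply x_in; lra). lra.
    + pose proof (Rmin_r t s). assert (mu x >= mu a) by (apply x_in; lra). lra.
Qed.

Lemma max_index_le (P : nat -> Prop) (n : nat) :
  (forall j, P j \/ ~ P j) -> P 0%nat ->
  exists i, (i <= n)%nat /\ P i /\ forall j, (j <= n)%nat -> P j -> (j <= i)%nat.
Proof.
  intros Pdec P0. induction n as [|n [i [i_le [Pi i_max]]]].
  - exists 0%nat. repeat split; [lia | exact P0 | intros; lia].
  - destruct (Pdec (S n)) as [PSn|nPSn].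
    + exists (S n). repeat split; [lia | exact PSn | intros; lia].
    + exists i. repeat split; [lia | exact Pi |].
      intros j j_le Pj. destruct (Nat.eq_dec j (S n)) as [->|]; [contradiction|].
      apply i_max; [lia | exact Pj].
Qed.

Section Chain.
Context {T : Type}.
Variables (F : nat -> T -> Prop) (n : nat).
Hypothesis chain_mono : forall i, (i < n)%nat -> forall x, F i x -> F (S i) x.

Lemma chain_le i j x : (i <= j)%nat -> (j <= n)%nat -> F i x -> F j x.
Proof.
  induction 1 as [|j ij IH]; intros jn Fix; [exact Fix|].
  apply chain_mono; [lia|]. apply IH; [lia | exact Fix].
Qed.

(* [chain_rank j x] is the least i <= j with [F i x], or [j] when there is none. *)
Fixpoint chain_rank (j : nat) (x : T) : nat :=
  match j with
  | O => O
  | S j' => if excluded_middle_informative (F j' x) then chain_rank j' x else S j'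
  end.

Lemma chain_rank_spec j x : (j <= n)%nat -> F j x ->
  (chain_rank j x <= j)%nat /\
  forall i, (i <= j)%nat -> (F i x <-> (chain_rank j x <= i)%nat).
Proof.
  induction j as [|j IH]; intros jn Fjx; simpl.
  - split; [lia|]. intros i i0. replace i with 0%nat by lia. split; [lia | auto].
  - destruct (excluded_middle_informative (F j x)) as [Fj|nFj].
    + destruct (IH ltac:(lia) Fj) as [rank_le rank_iff]. split; [lia|].
      intros i iSj. destruct (Nat.eq_dec i (S j)) as [->|]; [split; auto; lia|].
      apply rank_iff; lia.
    + split; [lia|]. intros i iSj. destruct (Nat.eq_dec i (S j)) as [->|]; [split; auto; lia|].
      split; [|lia]. intros Fi. exfalso. apply nFj, (chain_le i); [lia | lia | exact Fi].
Qed.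

End Chain.

Section LevelValues.
Variable c : R.
Hypothesis c_pos : 0 < c.

Definition level_value (i : nat) : R := c / INR (S i).

Lemma level_value_0 : level_value 0 = c.
Proof. unfold level_value. simpl. field. Qed.

Lemma level_value_pos i : 0 < level_value i.
Proof. unfold level_value. apply Rdiv_lt_0_compat; [exact c_pos | apply lt_0_INR; lia]. Qed.

Lemma level_value_le_le i j : (i <= j)%nat -> level_value j <= level_value i.
Proof.
  intros ij. unfold level_value, Rdiv. apply Rmult_le_compat_l; [lra|].
  apply Rinv_le_contravar; [apply lt_0_INR; lia | apply le_INR; lia].
Qed.

Lemma level_value_le_c i : level_value i <= c.
Proof. rewrite <- level_value_0. apply level_value_le_le. lia. Qed.

Lemma level_value_ge i j : level_value i >= level_value j <-> (i <= j)%nat.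
Proof.
  split; [|intros; apply Rle_ge, level_value_le_le; assumption].
  intros vij. destruct (le_lt_dec i j) as [|ji]; [assumption|]. exfalso.
  assert (level_value i < level_value j); [|lra].
  unfold level_value, Rdiv. apply Rmult_lt_compat_l; [exact c_pos|].
  apply Rinv_lt_contravar; [apply Rmult_lt_0_compat; apply lt_0_INR; lia|].
  apply lt_INR. lia.
Qed.

End LevelValues.

Section ChainFuzzySet.
Context {L : R0_algebra}.
Variables (F : nat -> L -> Prop) (n : nat) (c : R).
Hypothesis chain_mono : forall i, (i < n)%nat -> forall x, F i x -> F (S i) x.
Hypothesis chain_top : forall x, F n x.
Hypothesis c_pos : 0 < c.

Definition chain_fuzzy (x : L) : R := level_value c (chain_rank F n x).

Lemma chain_rank_le x : (chain_rank F n x <= n)%nat.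
Proof. exact (proj1 (chain_rank_spec F n chain_mono n x (le_n n) (chain_top x))). Qed.

Lemma chain_rank_iff i x : (i <= n)%nat -> (F i x <-> (chain_rank F n x <= i)%nat).
Proof. exact (proj2 (chain_rank_spec F n chain_mono n x (le_n n) (chain_top x)) i). Qed.

Lemma chain_fuzzy_bounds x : 0 < chain_fuzzy x <= c.
Proof. split; [apply level_value_pos | apply level_value_le_c]; exact c_pos. Qed.

Lemma level_set_chain_fuzzy_value i : (i <= n)%nat ->
  same_set (level_set chain_fuzzy (level_value c i)) (F i).
Proof.
  intros i_le x. unfold level_set, chain_fuzzy.
  rewrite level_value_ge, chain_rank_iff by assumption. reflexivity.
Qed.

Lemma level_set_chain_fuzzy t : 0 < t <= c ->
  exists i, (i <= n)%nat /\ same_set (level_set chain_fuzzy t) (F i).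
Proof.
  intros t_range.
  destruct (max_index_le (fun j => level_value c j >= t) n) as [i [i_le [it i_max]]].
  - intros j. destruct (Rge_dec (level_value c j) t); tauto.
  - rewrite level_value_0. lra.
  - exists i. split; [exact i_le|]. intros x. unfold level_set, chain_fuzzy.
    rewrite chain_rank_iff by exact i_le. split.
    + intros xt. apply i_max; [apply chain_rank_le | exact xt].
    + intros rank_i. apply Rge_trans with (level_value c i); [|exact it].
      apply level_value_ge; assumption.
Qed.

End ChainFuzzySet.

Theorem theorem3p26 (L : R0_algebra) (k : R) (n : nat) (F : nat -> L -> Prop) :
  0 <= k < 1 ->
  (forall i, (i <= n)%nat -> fated_filter L (F i)) ->
  (* strict chain F_0 ⊂ F_1 ⊂ ... ⊂ F_n *)
  (forall i, (i < n)%nat ->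
     (forall x, F i x -> F (S i) x) /\ (exists x, F (S i) x /\ ~ F i x)) ->
  (forall x : L, F n x) ->
  exists mu : L -> R,
    in_inqk_fuzzy_fated_filter L k mu /\
    (forall t, 0 < t <= (1 - k) / 2 ->
       exists i, (i <= n)%nat /\ same_set (level_set mu t) (F i)) /\
    (forall i, (i <= n)%nat ->
       exists t, 0 < t <= (1 - k) / 2 /\ same_set (level_set mu t) (F i)) /\
    same_set (level_set mu ((1 - k) / 2)) (F 0%nat).
Proof.
  intros k_range filters chain top.
  set (c := (1 - k) / 2).
  assert (c_pos : 0 < c) by (unfold c; lra).
  assert (mono : forall i, (i < n)%nat -> forall x, F i x -> F (S i) x)
    by (intros i i_lt; apply (chain i i_lt)).
  exists (chain_fuzzy F n c).
  split; [|split; [|split]].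
  - apply fuzzy_fated_filter_of_level_sets.
    + intros x. pose proof (chain_fuzzy_bounds F n c c_pos x). unfold c in *. lra.
    + intros x. apply fated_filter_same_set with (F (chain_rank F n x)).
      * intros y. symmetry.
        apply level_set_chain_fuzzy_value; [assumption.. | apply chain_rank_le; assumption].
      * apply filters, chain_rank_le; assumption.
  - apply level_set_chain_fuzzy; assumption.
  - intros i i_le. exists (level_value c i). split.
    + split; [apply level_value_pos | apply level_value_le_c]; exact c_pos.
    + apply level_set_chain_fuzzy_value; assumption.
  - pose proof (level_set_chain_fuzzy_value F n c mono top c_pos 0 (Nat.le_0_l n)) as level0.
    rewrite level_value_0 in level0. exact level0.
Qed.
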